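(* Let $G$ be a graph, $K$ a clique of $G$, and $x$ a vertex not in $K$ which is either a vertex of $G$ adjacent to no vertex of $K$ or a new vertex not in $G$, such that all vertices of $K$ have the same closed neighborhood in $G-x$. For $0\le i\le |K|$, let $G_i$ be the graph obtained from $G$ (adding $x$ as a new vertex if it is not in $G$) by joining $x$ by edges to exactly $i$ vertices of $K$. Then \[ (i-j)X_{G_k}+(j-k)X_{G_i}+(k-i)X_{G_j}=0\qquad\text{for any } 0\le i\le j\le k\le |K|. \]
   Context: All graphs are finite simple graphs. The chromatic symmetric function of a graph $G$ is $X_G=\sum_{\kappa}\prod_{v\in V(G)}x_{\kappa(v)}$, where $\kappa$ ranges over proper colorings $\kappa:V(G)\to\{1,2,\dots\}$. A clique is a set of pairwise adjacent vertices. The closed neighborhood of a vertex is the set consisting of the vertex and all vertices adjacent to it. *)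

From mathcomp Require Import all_boot all_order all_algebra.
From mathcomp Require Import mpoly.
Set Implicit Arguments. Unset Strict Implicit. Unset Printing Implicit Defensive.
Import GRing.Theory.
Local Open Scope ring_scope.

Definition simple_graph (V : finType) (e : rel V) : Prop :=
  irreflexive e /\ ssrbool.symmetric e.

Definition is_clique (V : finType) (e : rel V) (K : {set V}) : Prop :=
  forall u v, u \in K -> v \in K -> u != v -> e u v.

Definition closed_nbhd_del (V : finType) (e : rel V) (x v : V) : {set V} :=
  [set w | (w != x) && ((w == v) || e v w)].

Definition proper_col (V : finType) (e : rel V) (n : nat) (k : {ffun V -> 'I_n}) : bool :=
  [forall u, forall v, e u v ==> (k u != k v)].

(* The chromatic symmetric function X_G = sum_kappa prod_v x_{kappa v},
   truncated to the variables x_1..x_n (i.e. x_m := 0 for m > n). *)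
Definition csf (V : finType) (e : rel V) (n : nat) : {mpoly int[n]} :=
  \sum_(k : {ffun V -> 'I_n} | proper_col e k) \prod_(v : V) 'X_(k v).

Definition join_to (V : finType) (e : rel V) (x : V) (S : {set V}) : rel V :=
  fun u v => [|| e u v, (u == x) && (v \in S) | (v == x) && (u \in S)].

Definition join_new (V : finType) (e : rel V) (S : {set V}) : rel (option V) :=
  fun u v => match u, v with
             | Some a, Some b => e a b
             | None, Some b => b \in S
             | Some a, None => a \in S
             | None, None => false
             end.

(** A proper colouring of [G] with [x] joined to [S], a subset of the clique
    [K], is a proper colouring of [G] in which no vertex of [S] has the colour
    of [x]; as [S] is a clique, at most one of them can, so
    [X_(G + xS) = X_G - sum_(w in S) A_w], where [A_w] sums over the proper
    colourings of [G] with [kappa x = kappa w].  Swapping two vertices of [K]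
    is an automorphism of [G] fixing [x], so all [A_w] coincide and
    [X_(G + xS)] is an affine function of [#|S|]; any three values of an
    affine function satisfy the relation.  A new vertex is treated as an
    isolated vertex of the graph on [option V]. *)

From mathcomp Require Import all_boot all_algebra all_fingroup.
From mathcomp Require Import mpoly ring.
Set Implicit Arguments. Unset Strict Implicit. Unset Printing Implicit Defensive.
Import GRing.Theory.
Local Open Scope ring_scope.

Definition twins (V : finType) (e : rel V) (u v : V) : Prop :=
  forall w, w != u -> w != v -> e u w = e v w.

Lemma eq_csf (V : finType) (e1 e2 : rel V) n : e1 =2 e2 -> csf e1 n = csf e2 n.
Proof.
move=> e12; apply: eq_bigl => k; rewrite /proper_col.
by apply: eq_forallb => u; apply: eq_forallb => v; rewrite e12.
Qed.

Lemma three_term_affine (M : zmodType) (a b : M) (i j k : nat) :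
  (a - b *+ k) *~ (i%:Z - j%:Z) + (a - b *+ i) *~ (j%:Z - k%:Z)
  + (a - b *+ j) *~ (k%:Z - i%:Z) = 0.
Proof.
have affine_mulrz m z : (a - b *+ m) *~ z = a *~ z - b *~ (m%:Z * z).
  by rewrite mulrzBl pmulrn mulrzA.
rewrite !affine_mulrz [X in X + _]addrACA -opprD addrACA -opprD -!mulrzDr.
have -> : (i%:Z - j%:Z) + (j%:Z - k%:Z) + (k%:Z - i%:Z) = 0 by ring.
have -> : k%:Z * (i%:Z - j%:Z) + i%:Z * (j%:Z - k%:Z) + j%:Z * (k%:Z - i%:Z) = 0.
  by ring.
by rewrite !mulr0z subrr.
Qed.

Section JoinToClique.
Variables (V : finType) (e : rel V) (n : nat) (x : V).

Definition csf_eqcol (w : V) : {mpoly int[n]} :=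
  \sum_(k : {ffun V -> 'I_n} | proper_col e k && (k x == k w)) \prod_(v : V) 'X_(k v).

Lemma proper_col_join_to (S : {set V}) (k : {ffun V -> 'I_n}) :
  proper_col (join_to e x S) k = proper_col e k && ~~ [exists w in S, k x == k w].
Proof.
apply/idP/idP.
- move=> /forallP pk; apply/andP; split.
  + apply/forallP=> u; apply/forallP=> v; apply/implyP=> euv.
    by have /forallP/(_ v)/implyP := pk u; apply; rewrite /join_to euv.
  + apply/existsP=> [[w /andP [wS /eqP kxw]]].
    have /forallP/(_ w)/implyP := pk x.
    by rewrite /join_to eqxx wS orbT kxw eqxx => /(_ isT).
- case/andP=> /forallP pk /existsP no_w.
  apply/forallP=> u; apply/forallP=> v; apply/implyP.
  rewrite /join_to => /or3P [euv|/andP [/eqP -> vS]|/andP [/eqP -> uS]].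
  + by have /forallP/(_ v)/implyP := pk u; apply.
  + by apply/negP=> /eqP kxv; apply: no_w; exists v; rewrite vS kxv eqxx.
  + by apply/negP=> /eqP kxu; apply: no_w; exists u; rewrite uS kxu eqxx.
Qed.

Lemma sum_csf_eqcol_clique (S : {set V}) : is_clique e S ->
  \sum_(w in S) csf_eqcol w =
  \sum_(k : {ffun V -> 'I_n} | proper_col e k && [exists w in S, k x == k w])
    \prod_(v : V) 'X_(k v).
Proof.
move=> S_clique; rewrite /csf_eqcol.
under eq_bigr do rewrite big_mkcond.
rewrite exchange_big /= [RHS]big_mkcond /=; apply: eq_bigr => k _.
case: (boolP (proper_col e k)) => /= pk; last by rewrite big1.
case: (boolP [exists w in S, k x == k w]) => [/existsP [w0 /andP [w0S /eqP kxw0]]|no_w].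
- rewrite (bigD1 w0) //= kxw0 eqxx [X in _ + X]big1 ?addr0 // => w /andP [wS ww0].
  case: eqP => // kw0w.
  have ew0w : e w0 w by apply: S_clique; rewrite // eq_sym.
  by move: (forallP (forallP pk w0) w); rewrite ew0w kw0w eqxx.
- rewrite big1 // => w wS; case: eqP => // kxw.
  by case/existsP: no_w; exists w; rewrite wS kxw eqxx.
Qed.

Lemma csf_join_to_clique (S : {set V}) : is_clique e S ->
  csf (join_to e x S) n = csf e n - \sum_(w in S) csf_eqcol w.
Proof.
move=> S_clique; rewrite sum_csf_eqcol_clique // /csf.
rewrite [X in _ = X - _](bigID (fun k : {ffun V -> 'I_n} => [exists w in S, k x == k w])) /=.
by rewrite addrAC subrr add0r; apply: eq_bigl => k; apply: proper_col_join_to.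
Qed.

Hypotheses (e_irr : irreflexive e) (e_sym : ssrbool.symmetric e).

Lemma tperm_twins_hom (u v : V) : twins e u v -> {homo tperm u v : a b / e a b}.
Proof.
move=> uv a b.
case: tpermP => [->|->|/eqP au /eqP av]; case: tpermP => [->|->|/eqP bu /eqP bv];
  rewrite ?e_irr //.
- by rewrite e_sym.
- by rewrite -uv.
- by rewrite e_sym.
- by rewrite uv.
- by rewrite (e_sym a u) (e_sym a v) uv.
- by rewrite (e_sym a u) (e_sym a v) uv.
Qed.

Lemma csf_eqcol_twins (u v : V) : x != u -> x != v -> twins e u v ->
  csf_eqcol u = csf_eqcol v.
Proof.
move=> xu xv uv.
pose swap (k : {ffun V -> 'I_n}) : {ffun V -> 'I_n} := [ffun y => k (tperm u v y)].
have swapK : involutive swap by move=> k; apply/ffunP=> y; rewrite !ffunE tpermK.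
have swap_proper k : proper_col e k -> proper_col e (swap k).
  move=> /forallP pk; apply/forallP=> a; apply/forallP=> b; apply/implyP=> eab.
  rewrite !ffunE; have /forallP/(_ (tperm u v b))/implyP := pk (tperm u v a).
  by apply; apply: tperm_twins_hom.
rewrite /csf_eqcol (reindex_inj (inv_inj swapK)); apply: eq_big => k.
- rewrite !ffunE tpermL tpermD 1?eq_sym //; congr andb.
  by apply/idP/idP => [/swap_proper|]; rewrite ?swapK //; apply: swap_proper.
- move=> _; rewrite [RHS](reindex_inj (@perm_inj _ (tperm u v))) /=.
  by apply: eq_bigr => y _; rewrite ffunE.
Qed.

Variable K : {set V}.
Hypotheses (K_clique : is_clique e K) (xK : x \notin K).
Hypothesis K_twins : {in K &, forall u v, twins e u v}.

Lemma csf_join_to_affine : exists A : {mpoly int[n]},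
  forall S : {set V}, S \subset K -> csf (join_to e x S) n = csf e n - A *+ #|S|.
Proof.
have csf_join_sub (S : {set V}) : S \subset K ->
    csf (join_to e x S) n = csf e n - \sum_(w in S) csf_eqcol w.
  by move=> /subsetP SK; apply: csf_join_to_clique => u w uS wS; apply: K_clique; apply: SK.
have [K0|[w0 w0K]] := set_0Vmem K.
  exists 0 => S SK; rewrite csf_join_sub // mul0rn big1 // => w /(subsetP SK).
  by rewrite K0 inE.
exists (csf_eqcol w0) => S SK; rewrite csf_join_sub // -sumr_const.
congr (_ - _); apply: eq_bigr => w /(subsetP SK) wK.
have x_neq z : z \in K -> x != z by move=> zK; apply: contraNneq xK => ->.
by apply: csf_eqcol_twins; [apply: x_neq..|apply: K_twins].
Qed.

Lemma csf_join_to_three_term (Si Sj Sk : {set V}) :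
  Si \subset K -> Sj \subset K -> Sk \subset K ->
  csf (join_to e x Sk) n *~ (#|Si|%:Z - #|Sj|%:Z)
  + csf (join_to e x Si) n *~ (#|Sj|%:Z - #|Sk|%:Z)
  + csf (join_to e x Sj) n *~ (#|Sk|%:Z - #|Si|%:Z) = 0.
Proof.
have [A csfA] := csf_join_to_affine.
by move=> SiK SjK SkK; rewrite !csfA // three_term_affine.
Qed.

End JoinToClique.

Lemma twins_closed_nbhd_del (V : finType) (e : rel V) (x u v : V) :
  ssrbool.symmetric e -> ~~ e x u -> ~~ e x v ->
  closed_nbhd_del e x u = closed_nbhd_del e x v -> twins e u v.
Proof.
move=> e_sym xu xv Nuv w wu wv.
have [->|wx] := eqVneq w x; first by rewrite e_sym (negbTE xu) e_sym (negbTE xv).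
by move/setP/(_ w): Nuv; rewrite !inE wx (negbTE wu) (negbTE wv).
Qed.

Section NewVertex.
Variables (V : finType) (e : rel V).

Lemma join_new_join_to (S : {set V}) :
  join_new e S =2 join_to (join_new e set0) None (Some @: S).
Proof.
have None_notin : None \notin Some @: S by apply/imsetP => -[].
move=> [a|] [b|]; rewrite /join_to /= ?(negbTE None_notin) ?inE ?orbF //.
- by rewrite (mem_imset _ _ Some_inj).
- by rewrite (mem_imset _ _ Some_inj).
Qed.

Lemma join_new0_irr : irreflexive e -> irreflexive (join_new e set0).
Proof. by move=> e_irr [a|] /=. Qed.

Lemma join_new0_sym : ssrbool.symmetric e -> ssrbool.symmetric (join_new e set0).
Proof. by move=> e_sym [a|] [b|] /=. Qed.

Lemma is_clique_join_new0 (K : {set V}) :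
  is_clique e K -> is_clique (join_new e set0) (Some @: K).
Proof.
move=> K_clique _ _ /imsetP [a aK ->] /imsetP [b bK ->] ab.
by apply: K_clique => //; apply: contraNneq ab => ->.
Qed.

Lemma twins_join_new0 (u v : V) :
  [set w | (w == u) || e u w] = [set w | (w == v) || e v w] ->
  twins (join_new e set0) (Some u) (Some v).
Proof.
move=> Nuv [c|]; rewrite /= ?inE // !(inj_eq Some_inj) => cu cv.
by move/setP/(_ c): Nuv; rewrite !inE (negbTE cu) (negbTE cv).
Qed.

End NewVertex.

Theorem corollary2p3 :
  (* Case 1: x is a vertex of G adjacent to no vertex of K *)
  (forall (V : finType) (e : rel V) (K : {set V}) (x : V),
    simple_graph e -> is_clique e K -> x \notin K ->
    (forall v, v \in K -> ~~ e x v) ->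
    (forall u v, u \in K -> v \in K -> closed_nbhd_del e x u = closed_nbhd_del e x v) ->
    forall (i j k : nat) (Si Sj Sk : {set V}),
      (i <= j <= k)%N -> (k <= #|K|)%N ->
      Si \subset K -> #|Si| = i ->
      Sj \subset K -> #|Sj| = j ->
      Sk \subset K -> #|Sk| = k ->
      forall n : nat,
        csf (join_to e x Sk) n *~ (i%:Z - j%:Z)
        + csf (join_to e x Si) n *~ (j%:Z - k%:Z)
        + csf (join_to e x Sj) n *~ (k%:Z - i%:Z) = 0)
  /\
  (* Case 2: x is a new vertex (None) added to G *)
  (forall (V : finType) (e : rel V) (K : {set V}),
    simple_graph e -> is_clique e K ->
    (forall u v, u \in K -> v \in K ->
       [set w | (w == u) || e u w] = [set w | (w == v) || e v w]) ->
    forall (i j k : nat) (Si Sj Sk : {set V}),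
      (i <= j <= k)%N -> (k <= #|K|)%N ->
      Si \subset K -> #|Si| = i ->
      Sj \subset K -> #|Sj| = j ->
      Sk \subset K -> #|Sk| = k ->
      forall n : nat,
        csf (join_new e Sk) n *~ (i%:Z - j%:Z)
        + csf (join_new e Si) n *~ (j%:Z - k%:Z)
        + csf (join_new e Sj) n *~ (k%:Z - i%:Z) = 0).
Proof.
split.
- move=> V e K x [e_irr e_sym] K_clique xK x_nadj K_nbhd i j k Si Sj Sk _ _
    SiK <- SjK <- SkK <- n.
  apply: (csf_join_to_three_term n e_irr e_sym K_clique xK) => // u v uK vK.
  by apply: twins_closed_nbhd_del; [|apply: x_nadj..|apply: K_nbhd].
- move=> V e K [e_irr e_sym] K_clique K_nbhd i j k Si Sj Sk _ _
    SiK <- SjK <- SkK <- n.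
  rewrite !(eq_csf _ (join_new_join_to e _)).
  rewrite -(card_imset Si Some_inj) -(card_imset Sj Some_inj) -(card_imset Sk Some_inj).
  apply: (csf_join_to_three_term n (join_new0_irr e_irr) (join_new0_sym e_sym)
           (is_clique_join_new0 K_clique)); rewrite ?imsetS //.
  + by apply/imsetP => -[].
  + by move=> _ _ /imsetP [u uK ->] /imsetP [v vK ->]; apply/twins_join_new0/K_nbhd.
Qed.
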